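(* Let $p \equiv 1 \pmod 8$ and $q \equiv 3 \pmod 4$ be primes with $\left(\frac{p}{q}\right) = +1$. For a nonzero squarefree integer $b_1$ dividing $-4pq^2$, let $\mathcal{T}(b_1)$ denote the curve $$N^2 = b_1 M^4 - \frac{4pq^2}{b_1} e^4,$$ and call a rational point $(M,e,N)\in\mathbb{Q}^3$ on it nontrivial if $(M,e) \neq (0,0)$. Then: (a) if $\mathcal{T}(b_1)$ has a nontrivial rational point for some $b_1 \in \{2, -2, -2p, 2p\}$, then $\left(\frac{2}{p}\right)_4 = +1$; (b) if $\mathcal{T}(b_1)$ has a nontrivial rational point for some $b_1 \in \{q, -q, -pq, pq\}$, then $\left(\frac{q}{p}\right)_4 = +1$; (c) if $\mathcal{T}(b_1)$ has a nontrivial rational point for some $b_1 \in \{2q, -2q, -2pq, 2pq\}$, then $\left(\frac{2q}{p}\right)_4 = +1$.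
   Context: For a prime $p \equiv 1 \pmod 8$ and an integer $c$ that is a nonzero quadratic residue modulo $p$, the quartic residue symbol $\left(\frac{c}{p}\right)_4 \in \{\pm 1\}$ is defined by $\left(\frac{c}{p}\right)_4 \equiv c^{(p-1)/4} \pmod p$; it equals $+1$ iff $c$ is a fourth power modulo $p$. (Under the hypotheses, $2$, $q$ and $2q$ are quadratic residues modulo $p$.) The curves $\mathcal{T}(b_1)$ are the 2-isogeny descent torsors for the elliptic curve $y^2 = x(x^2 - 4pq^2)$; the paper states the result as a table listing, for each $b_1 \in\{2,-2,q,-q,2q,-2q\}$, the torsors $\mathcal{T}(b_1)$ and $\mathcal{T}(-pb_1)$ together with the corresponding condition. *)

From mathcomp Require Import all_boot all_order all_algebra.
Set Implicit Arguments. Unset Strict Implicit. Unset Printing Implicit Defensive.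
Import Order.TTheory GRing.Theory Num.Theory.

Definition legendre_is_one (a q : nat) : Prop :=
  ~~ (q %| a) /\ exists x : nat, x ^ 2 = a %[mod q].

Definition quartic_is_one (c p : nat) : Prop :=
  c ^ ((p - 1) %/ 4) = 1 %[mod p].

Definition T_has_nontrivial_point (p q : nat) (b1 : int) : Prop :=
  exists M e N : rat, (M, e) != (0%R, 0%R) /\
    (N ^+ 2 = b1%:~R * M ^+ 4 - (4 * p%:R * q%:R ^+ 2 / b1%:~R) * e ^+ 4)%R.

(* Write b1 = k a0 with k in {2, q, 2q}, a0 in {1, -1, p, -p}, and let k w = 2 q.
   A nontrivial rational point on T(b1) gives coprime integers u, v and an
   integer N with N^2 = k (a u^4 + p c v^4), where either (a, c) = (e, -e w^2)
   or (a, c) = (-e w^2, e) for a sign e; in both cases a^((p-1)/4) = 1 mod p,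
   because 8 | p - 1 and w is a quadratic residue mod p.
   Every prime factor r of N is a quadratic residue mod p: for r = 2 because
   p = 1 mod 8, for r = q by hypothesis, and otherwise because reducing the
   equation mod r makes p a square mod r, so that r is a residue mod p by
   quadratic reciprocity (through Gauss sums).  Moreover p does not divide N,
   since otherwise it would divide both u and v, so (N/p) = 1.  Finally
   N^2 = k a u^4 mod p, and raising this to the power (p-1)/4 gives
   k^((p-1)/4) = N^((p-1)/2) = 1 mod p. *)

From mathcomp Require Import all_boot all_order all_algebra all_field cyclic.
From mathcomp Require Import ring zify.
Set Implicit Arguments. Unset Strict Implicit. Unset Printing Implicit Defensive.
Import Order.TTheory GRing.Theory Num.Theory.
Local Open Scope ring_scope.

(** * Quadratic residues modulo p *)

Lemma finField_prim_root (F : finFieldType) (d : nat) :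
  (0 < d)%N -> (d %| #|F|.-1)%N -> exists z : F, d.-primitive_root z.
Proof.
move=> d_gt0 d_dvd; have F_gt1 := finNzRing_gt1 F.
have : has #|F|.-1.-primitive_root (enum (predC1 (0 : F))).
  apply: has_prim_root; first by rewrite -ltnS prednK // ltnW.
  - apply/allP=> x; rewrite mem_enum /= => x0; rewrite unity_rootE.
    by apply/eqP/(mulIf x0); rewrite mul1r -exprSr prednK ?expf_card // ltnW.
  - exact: enum_uniq.
  - by rewrite -cardE cardC1.
by case/hasP=> z _ z_prim; exists (z ^+ (#|F|.-1 %/ d)); apply: dvdn_prim_root.
Qed.

Lemma Fp_fermat (p : nat) (x : 'F_p) : prime p -> x != 0 -> x ^+ p.-1 = 1.
Proof.
move=> p_pr x0; apply: (mulIf x0); rewrite mul1r -exprSr prednK ?prime_gt0 //.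
by have := expf_card x; rewrite card_Fp.
Qed.

Lemma oner_neq_opp1 (R : nzRingType) (r : nat) :
  r \in [pchar R] -> odd r -> (1 : R) != -1.
Proof.
move=> charR r_odd; rewrite -subr_eq0 opprK -mulr2n -(dvdn_pcharf charR).
by rewrite dvdn_prime2 ?(pcharf_prime charR) //; apply: contraTneq r_odd => ->.
Qed.

Lemma sign_intr_inj (R : nzRingType) (x y : int) : (1 : R) != -1 ->
  x ^+ 2 = 1 -> y ^+ 2 = 1 -> x%:~R = y%:~R :> R -> x = y.
Proof.
move=> R1 /eqP; rewrite sqrf_eq1 => /orP[]/eqP-> /eqP.
all: rewrite sqrf_eq1 => /orP[]/eqP-> //; rewrite intrN /= => /eqP.
  by rewrite (negPf R1).
by rewrite eq_sym (negPf R1).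
Qed.

(* The Legendre symbol (a/p), through Euler's criterion; it takes its values in
   int so that it can be cast into fields of any characteristic. *)
Definition legendre (p : nat) (a : 'F_p) : int :=
  if a == 0 then 0 else if a ^+ p./2 == 1 then 1 else -1.

Lemma legendre0 (p : nat) : legendre (0 : 'F_p) = 0.
Proof. by rewrite /legendre eqxx. Qed.

Section Legendre.

Variable p : nat.
Hypotheses (p_pr : prime p) (p_odd : odd p).

Let Fp1 : (1 : 'F_p) != -1 := oner_neq_opp1 (pchar_Fp p_pr) p_odd.

Let half_gt0 : (0 < p./2)%N.
Proof. by rewrite -double_gt0 odd_halfK //; have := prime_gt1 p_pr; lia. Qed.

Lemma Fp_euler (a : 'F_p) : a != 0 -> a ^+ p./2 = 1 \/ a ^+ p./2 = -1.
Proof.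
move=> a0; have : (a ^+ p./2) ^+ 2 == 1.
  by rewrite -exprM muln2 odd_halfK ?Fp_fermat.
by rewrite sqrf_eq1 => /orP[]/eqP; [left|right].
Qed.

Lemma legendreE (a : 'F_p) : (legendre a)%:~R = a ^+ p./2.
Proof.
rewrite /legendre; have [->|a0] := eqVneq a 0.
  by rewrite expr0n eqn0Ngt half_gt0.
by case: ifPn => [/eqP-> //|]; case: (Fp_euler a0) => ->; rewrite ?eqxx.
Qed.

Lemma legendre_sqr (a : 'F_p) : a != 0 -> legendre a ^+ 2 = 1.
Proof. by move=> a0; rewrite /legendre (negPf a0); case: ifP. Qed.

Lemma legendreM (a b : 'F_p) : legendre (a * b) = legendre a * legendre b.
Proof.
have [->|a0] := eqVneq a 0; first by rewrite mul0r /legendre eqxx mul0r.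
have [->|b0] := eqVneq b 0; first by rewrite mulr0 /legendre eqxx mulr0.
apply: (sign_intr_inj Fp1); rewrite ?legendre_sqr ?mulf_neq0 //.
  by rewrite exprMn !legendre_sqr ?mulr1.
by rewrite intrM !legendreE exprMn.
Qed.

Lemma legendre1 : legendre (1 : 'F_p) = 1.
Proof. by rewrite /legendre oner_eq0 expr1n eqxx. Qed.

Lemma legendreX (a : 'F_p) k : legendre (a ^+ k) = legendre a ^+ k.
Proof. by elim: k => [|k IHk]; rewrite ?legendre1 // !exprS legendreM IHk. Qed.

Lemma legendre_eq1 (a : 'F_p) : legendre a = 1 -> a ^+ p./2 = 1.
Proof. by rewrite -legendreE => ->. Qed.

Lemma legendreN1 : (4 %| p.-1)%N -> legendre (-1 : 'F_p) = 1.
Proof.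
move=> p4; rewrite /legendre oppr_eq0 oner_eq0 -signr_odd.
suff -> : odd p./2 = false by rewrite eqxx.
by move: p4; rewrite -(odd_halfK p_odd); case/dvdnP=> k; lia.
Qed.

Lemma legendre_nonresidue : exists a : 'F_p, legendre a = -1.
Proof.
have p_gt1 := prime_gt1 p_pr.
have [w w_prim] : exists w : 'F_p, p.-1.-primitive_root w.
  by apply: finField_prim_root; rewrite ?card_Fp //; lia.
have w0 : w != 0 by rewrite (prim_root_eq0 w_prim); lia.
exists w; rewrite /legendre (negPf w0); case: ifP => // /eqP wh.
have := prim_order_dvd w_prim p./2; rewrite wh eqxx => /dvdn_leq.
by have := odd_halfK p_odd; lia.
Qed.

Lemma sum_legendre : \sum_(a : 'F_p) legendre a = 0.
Proof.
have [n nE] := legendre_nonresidue.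
have n0 : n != 0 by apply: contra_eq_neq nE => ->; rewrite /legendre eqxx.
have : \sum_(a : 'F_p) legendre a = - \sum_(a : 'F_p) legendre a.
  rewrite {1}(reindex_inj (mulfI n0)) /= -mulN1r mulr_sumr.
  by apply: eq_bigr => a _; rewrite legendreM nE.
by move/eqP; rewrite -subr_eq0 opprK -mulr2n mulrn_eq0 => /eqP.
Qed.

Lemma legendre_natr (n : nat) : (0 < n)%N ->
  (forall r, prime r -> (r %| n)%N -> legendre (r%:R : 'F_p) = 1) ->
  legendre (n%:R : 'F_p) = 1.
Proof.
move=> n_gt0 r_res; rewrite (prod_prime_decomp n_gt0) natr_prod big_seq.
apply: (big_ind (fun a => legendre a = 1)) => [|a b a1 b1|[r k] /=].
- exact: legendre1.
- by rewrite legendreM a1 b1.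
case/mem_prime_decomp=> r_pr k_gt0 rk_n.
by rewrite natrX legendreX r_res ?expr1n // (dvdn_trans (dvdn_exp k_gt0 (dvdnn r))).
Qed.

End Legendre.

(* If w is a primitive 8th root of unity then w + w^7 = w + w^-1 squares to 2. *)
Lemma legendre_two (p : nat) : prime p -> (8 %| p.-1)%N -> legendre (2%:R : 'F_p) = 1.
Proof.
move=> p_pr p8; have p_odd : odd p by case: (even_prime p_pr) p8 => [->|].
have [w w_prim] : exists w : 'F_p, 8.-primitive_root w.
  by apply: finField_prim_root; rewrite ?card_Fp.
have w8 : w ^+ 8 = 1 := prim_expr_order w_prim.
have w4 : w ^+ 4 = -1.
  have /eqP : (w ^+ 4) ^+ 2 = 1 by rewrite -exprM.
  rewrite sqrf_eq1 => /orP[/eqP w4|/eqP //].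
  by have := prim_order_dvd w_prim 4; rewrite w4 eqxx.
have y2 : (w + w ^+ 7) ^+ 2 = 2%:R.
  transitivity (w ^+ 2 * (1 + w ^+ 4) + 2%:R * w ^+ 8 + w ^+ 6 * (w ^+ 8 - 1)).
    ring.
  by rewrite w4 w8; ring.
have y0 : w + w ^+ 7 != 0.
  apply: contra_eq_neq y2 => ->; rewrite expr0n eq_sym -(dvdn_pcharf (pchar_Fp p_pr)).
  by rewrite dvdn_prime2 //; apply: contraTneq p_odd => ->.
by rewrite -y2 legendreX // legendre_sqr.
Qed.

(** * Gauss sums and quadratic reciprocity *)

Section GaussSum.

Variables (p : nat) (F : fieldType) (z : F).
Hypotheses (p_pr : prime p) (p_odd : odd p) (z_prim : p.-primitive_root z).

Definition gauss_sum := \sum_(a : 'F_p) (legendre a)%:~R * z ^+ a.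

Lemma prim_expr_Fp_natr n : z ^+ (n%:R : 'F_p) = z ^+ n.
Proof. by rewrite val_Fp_nat // prim_expr_mod. Qed.

Lemma prim_expr_FpD (a b : 'F_p) : z ^+ (a + b)%R = z ^+ a * z ^+ b.
Proof. by rewrite -[a]natr_Zp -[b]natr_Zp -natrD !prim_expr_Fp_natr exprD. Qed.

Lemma prim_expr_FpM (a : 'F_p) n : z ^+ (a * n%:R)%R = z ^+ a ^+ n.
Proof. by rewrite -[a]natr_Zp -natrM !prim_expr_Fp_natr exprM. Qed.

Lemma sum_prim_expr_Fp (t : 'F_p) :
  \sum_(a : 'F_p) z ^+ (a * t)%R = if t == 0 then p%:R else 0.
Proof.
have [->|t0] := eqVneq t 0.
  by under eq_bigr do rewrite mulr0 expr0; rewrite sumr_const card_Fp.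
have z1 : z != 1.
  apply: contraTneq (prime_gt1 p_pr) => z1.
  by move: (prim_order_dvd z_prim 1); rewrite expr1 z1 eqxx dvdn1 => /eqP->.
have sum0 : \sum_(a : 'F_p) z ^+ a = 0.
  set S := \sum_a _; suff : S * (z - 1) = 0.
    by move/eqP; rewrite mulf_eq0 subr_eq0 (negPf z1) orbF => /eqP.
  apply/eqP; rewrite mulrBr mulr1 subr_eq0; apply/eqP.
  rewrite mulr_suml /S [RHS](reindex_inj (addIr 1)).
  by apply: eq_bigr => a _; rewrite prim_expr_FpD -[1]/(1%:R) prim_expr_Fp_natr.
by rewrite -[RHS]sum0 [RHS](reindex_inj (mulIf t0)).
Qed.

Lemma gauss_sum_sqr : gauss_sum ^+ 2 = (legendre (-1 : 'F_p))%:~R * p%:R.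
Proof.
have shift (a : 'F_p) : (legendre a)%:~R * z ^+ a * gauss_sum =
    \sum_(c : 'F_p) (legendre c)%:~R * z ^+ (a * (1 + c))%R.
  have [->|a0] := eqVneq a (0 : 'F_p).
    under eq_bigr do rewrite mul0r expr0 mulr1.
    by rewrite -rmorph_sum (sum_legendre p_pr p_odd) legendre0 !mul0r.
  rewrite /gauss_sum (reindex_inj (mulfI a0)) mulr_sumr; apply: eq_bigr => c _.
  rewrite (legendreM p_pr p_odd) mulrDr mulr1 prim_expr_FpD intrM.
  have sq : (legendre a)%:~R ^+ 2 = 1 :> F by rewrite -rmorphXn legendre_sqr.
  transitivity ((legendre a)%:~R ^+ 2 * ((legendre c)%:~R * (z ^+ a * z ^+ (a * c)%R))).
    ring.
  by rewrite sq mul1r.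
rewrite expr2 {1}/gauss_sum mulr_suml (eq_bigr _ (fun a _ => shift a)).
rewrite exchange_big (eq_bigr (fun c => (legendre c)%:~R *
    (if 1 + c == 0 then p%:R else 0))) => [|c _]; last first.
  by rewrite -mulr_sumr; congr (_ * _); apply: sum_prim_expr_Fp.
rewrite (bigD1 (-1 : 'F_p)) // big1 /= => [|c c_neq].
  by rewrite addr0 subrr eqxx.
by rewrite addrC addr_eq0 (negPf c_neq) mulr0.
Qed.

Lemma gauss_sum_frobenius r : r \in [pchar F] ->
  gauss_sum = (legendre (r%:R : 'F_p))%:~R * gauss_sum ^+ r.
Proof.
move=> charF; have r0 : (r%:R : 'F_p) != 0.
  rewrite -(dvdn_pcharf (pchar_Fp p_pr)) dvdn_prime2 ?(pcharf_prime charF) //.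
  by apply: contraFneq (prim_root_pcharF z_prim (dvdnn p)) => ->.
have -> : gauss_sum ^+ r = \sum_(a : 'F_p) (legendre a)%:~R * z ^+ (a * r%:R)%R.
  rewrite -(pFrobenius_autE charF) rmorph_sum; apply: eq_bigr => a _.
  by rewrite rmorphM /= rmorph_int pFrobenius_autE prim_expr_FpM.
rewrite mulr_sumr /gauss_sum (reindex_inj (mulIf r0)).
by apply: eq_bigr => a _; rewrite (legendreM p_pr p_odd) intrM mulrCA mulrA.
Qed.

End GaussSum.

(* Work in a field of characteristic r containing the p-th roots of unity: the
   Gauss sum g has g^2 = p, the square of an element of the prime field, so
   g^r = g, and then gauss_sum_frobenius forces (r/p) = 1. *)
Lemma legendre_prime_of_sqr_mod (p r : nat) :
  prime p -> prime r -> odd r -> r != p -> (4 %| p.-1)%N ->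
  (exists x : nat, x ^ 2 = p %[mod r]) -> legendre (r%:R : 'F_p) = 1.
Proof.
move=> p_pr r_pr r_odd rp p4 [x x2].
have p_odd : odd p by case: (even_prime p_pr) p4 => [->|].
have r0 : (r%:R : 'F_p) != 0.
  by rewrite -(dvdn_pcharf (pchar_Fp p_pr)) dvdn_prime2 // eq_sym.
have [F charF cardF] : {F : finFieldType | r \in [pchar F] & #|F| = (r ^ p.-1)%N}.
  by apply: pPrimePowerField; have := prime_gt1 p_pr; lia.
have [z z_prim] : exists z : F, p.-primitive_root z.
  apply: finField_prim_root (prime_gt0 p_pr) _; rewrite cardF.
  rewrite (dvdn_pcharf (pchar_Fp p_pr)) -subn1 natrB ?expn_gt0 ?prime_gt0 //.
  by rewrite natrX Fp_fermat // subrr.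
set g := gauss_sum p z.
have g2 : g ^+ 2 = p%:R by rewrite gauss_sum_sqr // legendreN1 // mul1r.
have g0 : g != 0.
  apply/eqP=> g0; move: g2; rewrite g0 expr2 mul0r => /esym/eqP.
  by rewrite -(dvdn_pcharf charF) dvdn_prime2 // (negPf rp).
have x2F : (x ^ 2)%:R = p%:R :> F.
  by rewrite -(GRing.natr_mod_pchar charF) x2 GRing.natr_mod_pchar.
have g_fixed : g ^+ r = g.
  move/eqP: g2; rewrite -x2F natrX eqf_sqr => /orP[]/eqP->;
  by rewrite -(pFrobenius_autE charF) ?pFrobenius_autN pFrobenius_aut_nat.
have := gauss_sum_frobenius p_pr p_odd z_prim charF; rewrite -/g g_fixed.
rewrite -{1}[g]mul1r => /(mulIf g0) legr1.
by apply: (sign_intr_inj (oner_neq_opp1 charF r_odd)); rewrite ?legendre_sqr ?expr1n.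
Qed.

(** * Integral points and their reductions *)

Lemma rat_sqr_int (x : rat) (n : int) : x ^+ 2 = n%:~R -> x = (numq x)%:~R.
Proof.
move=> x2; have d_gt0 := denq_gt0 x.
have E : numq x ^+ 2 = n * denq x ^+ 2.
  by apply: (@intr_inj rat); rewrite rmorphXn rmorphM rmorphXn /= numqE exprMn x2.
have : (`|denq x| %| `|numq x| ^ 2)%N.
  by rewrite -abszX E abszM abszX dvdn_mull // dvdn_exp.
move/gcdn_idPr; rewrite (eqP (coprimeXl _ (coprime_num_den x))) => den1.
have {}den1 : denq x = 1 by rewrite -[denq x]gez0_abs ?ltW // -den1.
by rewrite numqE den1 mulr1.
Qed.

Lemma rat_pair_primitive (M e : rat) : (M, e) != (0, 0) ->
  exists s (m f : int), [/\ coprimez m f, M * s = m%:~R & e * s = f%:~R].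
Proof.
have [->|e0] := eqVneq e 0.
  rewrite xpair_eqE eqxx andbT => M0.
  by exists M^-1, 1, 0; rewrite mulfV // mul0r.
move=> _; set x := M / e.
exists ((denq x)%:~R / e), (numq x), (denq x); split.
- by rewrite coprimezE coprime_num_den.
- by rewrite mulrA -mulrAC -/x numqE.
- by rewrite mulrC divfK.
Qed.

Lemma T_coprime_integral_point (p q : nat) (b1 c : int) : b1 != 0 ->
  b1 * c = - (4 * p%:Z * q%:Z ^+ 2) -> T_has_nontrivial_point p q b1 ->
  exists m f N : int, coprimez m f /\ N ^+ 2 = b1 * m ^+ 4 + c * f ^+ 4.
Proof.
move=> b1_neq0 b1c [M [e [N [Me0 EN]]]].
have b1Q : b1%:~R != 0 :> rat by rewrite intr_eq0.
have cE : 4 * p%:R * q%:R ^+ 2 / b1%:~R = - c%:~R :> rat.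
  apply: (mulIf b1Q); rewrite divfK // mulNr -intrM (mulrC c) b1c intrN opprK.
  by rewrite !intrM.
have [s [m [f [mf Ms es]]]] := rat_pair_primitive Me0.
have N2 : (N * s ^+ 2) ^+ 2 = (b1 * m ^+ 4 + c * f ^+ 4)%:~R.
  rewrite rmorphD 2!rmorphM 2!rmorphXn /= -Ms -es exprMn EN cE; ring.
exists m, f, (numq (N * s ^+ 2)); split => //.
by apply: (@intr_inj rat); rewrite -N2 rmorphXn /= -(rat_sqr_int N2).
Qed.

Lemma intr_quartic_eqn (R : pzRingType) (k : nat) (a b u v N : int) :
  N ^+ 2 = k%:Z * (a * u ^+ 4 + b * v ^+ 4) ->
  (N%:~R : R) ^+ 2 = k%:R * (a%:~R * u%:~R ^+ 4 + b%:~R * v%:~R ^+ 4).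
Proof.
move/(congr1 (fun x : int => (x%:~R : R))).
by rewrite rmorphXn intrM intrD 2!intrM !rmorphXn.
Qed.

Lemma coprimez_Fp_neq0 (r : nat) (m f : int) : prime r -> coprimez m f ->
  m%:~R = 0 :> 'F_r -> f%:~R != 0 :> 'F_r.
Proof.
move=> r_pr mf /eqP; rewrite -!(dvdz_pcharf (pchar_Fp r_pr)) => rm; apply/negP => rf.
have : (r%:Z %| gcdz m f)%Z by rewrite dvdz_gcd rm.
by rewrite (eqP mf) dvdz1 => /eqP r1; move: r_pr; rewrite -[r]/`|r%:Z|%N r1.
Qed.

Lemma quartic_form_root_sqr (K : fieldType) (a b p w m f : K) :
  a * b = - (p * w ^+ 2) -> w != 0 -> f != 0 -> a * m ^+ 4 + b * f ^+ 4 = 0 ->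
  (a * m ^+ 2 / (w * f ^+ 2)) ^+ 2 = p.
Proof.
move=> ab w0 f0 /eqP; rewrite addr_eq0 => /eqP am.
transitivity (a * (a * m ^+ 4) / (w * f ^+ 2) ^+ 2).
  by rewrite expr_div_n; congr (_ / _); ring.
by rewrite am mulrN mulrA ab; field; rewrite f0 w0.
Qed.

Lemma sqr_mod_of_quartic_eqn (p r k w : nat) (a b m f N : int) : prime r ->
  ~~ (r %| k * w * p)%N -> a * b = - (p%:Z * w%:Z ^+ 2) -> coprimez m f ->
  N ^+ 2 = k%:Z * (a * m ^+ 4 + b * f ^+ 4) -> (r %| `|N|)%N ->
  exists x : nat, x ^ 2 = p %[mod r].
Proof.
move=> r_pr r_kwp ab mf E rN; have charFr := pchar_Fp r_pr.
move: r_kwp; rewrite !Euclid_dvdM // !(dvdn_pcharf charFr) !negb_or -!andbA.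
case/and3P=> k0 w0 p0.
have abF : a%:~R * b%:~R = - (p%:R * w%:R ^+ 2) :> 'F_r.
  by move/(congr1 (fun x : int => (x%:~R : 'F_r))): ab; rewrite rmorphN 2!rmorphM rmorphXn.
have a0 : a%:~R != 0 :> 'F_r.
  apply: contra_neq (mulf_neq0 p0 (expf_neq0 2 w0)) => a0.
  by apply/oppr_inj; rewrite -abF a0 mul0r oppr0.
have Q : a%:~R * m%:~R ^+ 4 + b%:~R * f%:~R ^+ 4 = 0 :> 'F_r.
  have N0 : N%:~R = 0 :> 'F_r by apply/eqP; rewrite -(dvdz_pcharf charFr).
  move: (intr_quartic_eqn 'F_r E); rewrite N0 expr0n => /esym/eqP.
  by rewrite mulf_eq0 (negPf k0) => /eqP.
have f0 : f%:~R != 0 :> 'F_r.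
  apply/negP => /eqP f0; move: (Q); rewrite f0 expr0n mulr0 addr0 => /eqP.
  rewrite mulf_eq0 (negPf a0) expf_eq0 /= => /eqP/(coprimez_Fp_neq0 r_pr mf).
  by rewrite f0 eqxx.
have := quartic_form_root_sqr abF w0 f0 Q; set y := _ / _ => y2.
by exists y; apply/eqP; rewrite -!val_Fp_nat // natrX natr_Zp y2.
Qed.

(* If p | N then p | u, and after dividing the equation by p it also gives p | v. *)
Lemma Fp_quartic_eqn_neq0 (p k : nat) (a c u v N : int) : prime p ->
  k%:R != 0 :> 'F_p -> a%:~R != 0 :> 'F_p -> c%:~R != 0 :> 'F_p -> coprimez u v ->
  N ^+ 2 = k%:Z * (a * u ^+ 4 + p%:Z * c * v ^+ 4) -> N%:~R != 0 :> 'F_p.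
Proof.
move=> p_pr k0 a0 c0 uv E; have charFp := pchar_Fp p_pr.
have pF : (p%:Z%:~R : 'F_p) = 0 := pchar_Fp_0 p_pr.
apply/negP => /eqP N0.
have u0 : u%:~R = 0 :> 'F_p.
  move: (intr_quartic_eqn 'F_p E); rewrite N0 intrM pF !mul0r addr0 expr0n /=.
  by move/esym/eqP; rewrite 2!mulf_eq0 (negPf k0) (negPf a0) expf_eq0 /= => /eqP.
have /negP[] := coprimez_Fp_neq0 p_pr uv u0.
have pZ0 : p%:Z != 0 by rewrite eqz_nat -lt0n prime_gt0.
have [u1 uE] : exists u1, u = u1 * p%:Z.
  by apply/dvdzP; rewrite (dvdz_pcharf charFp) u0.
have [N1 NE] : exists N1, N = N1 * p%:Z.
  by apply/dvdzP; rewrite (dvdz_pcharf charFp) N0.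
have E1 : k%:Z * c * v ^+ 4 = p%:Z * (N1 ^+ 2 - k%:Z * a * p%:Z ^+ 2 * u1 ^+ 4).
  apply: (mulfI pZ0); transitivity (k%:Z * (p%:Z * c * v ^+ 4)); first by ring.
  transitivity (N ^+ 2 - k%:Z * (a * u ^+ 4)); first by rewrite E; ring.
  by rewrite NE uE; ring.
move/(congr1 (fun x : int => x%:~R : 'F_p)): E1.
rewrite [RHS]intrM pF mul0r 2!intrM rmorphXn => /eqP.
by rewrite 2!mulf_eq0 (negPf k0) (negPf c0) expf_eq0.
Qed.

Lemma Fp_quartic_of_sqr (p t : nat) (k a u N : 'F_p) : prime p -> p.-1 = (t * 4)%N ->
  N ^+ 2 = k * a * u ^+ 4 -> u != 0 -> N ^+ (t * 2) = 1 -> a ^+ t = 1 -> k ^+ t = 1.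
Proof.
move=> p_pr pt E u0 Nt1 at1; move/(congr1 (fun x => x ^+ t)): E.
by rewrite -exprM 2!exprMn -exprM (mulnC 2) (mulnC 4) Nt1 at1 -pt Fp_fermat // !mulr1.
Qed.

(** * The quartic character of k *)

Section Proposition4.

Variables p q : nat.
Hypotheses (p_pr : prime p) (q_pr : prime q) (p8 : (p %% 8 = 1)%N)
  (q4 : (q %% 4 = 3)%N) (p_sqr_mod_q : legendre_is_one p q).

Let t := ((p - 1) %/ 4)%N.

Let pt : p.-1 = (t * 4)%N.
Proof. by rewrite /t; move: (divn_eq p 8); rewrite p8; lia. Qed.

Let p_odd : odd p.
Proof. by rewrite (divn_eq p 8) p8 addn1 /= oddM andbF. Qed.

Let p_half : p./2 = (t * 2)%N.
Proof. by apply: double_inj; rewrite odd_halfK // pt -!muln2; lia. Qed.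

Let t_even : ~~ odd t.
Proof.
have -> : t = (p %/ 8 * 2)%N by move: pt (divn_eq p 8); rewrite p8; lia.
by rewrite oddM andbF.
Qed.

Let p8_dvd : (8 %| p.-1)%N.
Proof. by apply/dvdnP; exists (p %/ 8)%N; move: (divn_eq p 8); rewrite p8; lia. Qed.

Let p4_dvd : (4 %| p.-1)%N.
Proof. by rewrite pt dvdn_mull. Qed.

Let q_neq_p : q != p.
Proof. by apply/eqP => qp; move: p8 q4; rewrite qp; lia. Qed.

Let p_ndvd_2q : ~~ (p %| 2 * q)%N.
Proof.
rewrite Euclid_dvdM // !dvdn_prime2 // negb_or (eq_sym p q) q_neq_p andbT.
by apply: contraTneq p_odd => ->.
Qed.

Lemma legendre_q : legendre (q%:R : 'F_p) = 1.
Proof.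
apply: legendre_prime_of_sqr_mod => //; last by case: p_sqr_mod_q.
by rewrite (divn_eq q 4) q4 addn3 /= oddM andbF.
Qed.

Lemma legendre_dvd_2q (w : nat) : (w %| 2 * q)%N -> legendre (w%:R : 'F_p) = 1.
Proof.
move=> w2q; apply: legendre_natr => //.
  by apply: dvdn_gt0 _ w2q; rewrite muln_gt0 (prime_gt0 q_pr).
move=> r r_pr rw.
have := dvdn_trans rw w2q; rewrite Euclid_dvdM // !dvdn_prime2 //.
by case/orP=> /eqP->; [apply: legendre_two | apply: legendre_q].
Qed.

Lemma legendre_of_quartic_eqn (k w : nat) (a b u v N : int) :
  (k * w = 2 * q)%N -> a * b = - (p%:Z * w%:Z ^+ 2) -> coprimez u v ->
  N ^+ 2 = k%:Z * (a * u ^+ 4 + b * v ^+ 4) -> N%:~R != 0 :> 'F_p ->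
  legendre (N%:~R : 'F_p) = 1.
Proof.
move=> kw ab uv E N0.
rewrite [N]intEsign intrM intr_sign legendreM // legendreX // legendreN1 // expr1n mul1r.
apply: legendre_natr => // [|r r_pr rN].
  by rewrite absz_gt0; apply: contraNneq N0 => ->.
have [->|r2] := eqVneq r 2; first exact: legendre_two.
have [->|rq] := eqVneq r q; first exact: legendre_q.
have [rp|rp] := eqVneq r p.
  by move: N0; rewrite -(dvdz_pcharf (pchar_Fp p_pr)) -rp => /negP[].
apply: legendre_prime_of_sqr_mod => //.
  by case: (even_prime r_pr) r2 => [->|].
apply: (sqr_mod_of_quartic_eqn r_pr _ ab uv E rN).
by rewrite kw !Euclid_dvdM // !dvdn_prime2 // (negPf r2) (negPf rq) (negPf rp).
Qed.

Lemma quartic_of_integral_point (k w : nat) (a c u v N : int) :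
  (k * w = 2 * q)%N -> a * c = - w%:Z ^+ 2 -> a%:~R ^+ t = 1 :> 'F_p ->
  coprimez u v -> N ^+ 2 = k%:Z * (a * u ^+ 4 + p%:Z * c * v ^+ 4) ->
  k%:R ^+ t = 1 :> 'F_p.
Proof.
move=> kw ac at1 uv E; have charFp := pchar_Fp p_pr.
have k0 : k%:R != 0 :> 'F_p.
  by rewrite -(dvdn_pcharf charFp); apply: contraNN p_ndvd_2q; rewrite -kw => /dvdn_mulr->.
have w0 : w%:R != 0 :> 'F_p.
  by rewrite -(dvdn_pcharf charFp); apply: contraNN p_ndvd_2q; rewrite -kw => /dvdn_mull->.
have /norP[a0 c0] : ~~ ((a%:~R == 0 :> 'F_p) || (c%:~R == 0 :> 'F_p)).
  by rewrite -mulf_eq0 -intrM ac intrN oppr_eq0 rmorphXn expf_eq0.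
have N0 := Fp_quartic_eqn_neq0 p_pr k0 a0 c0 uv E.
have ab : a * (p%:Z * c) = - (p%:Z * w%:Z ^+ 2) by rewrite mulrCA ac mulrN.
have EF := intr_quartic_eqn 'F_p E.
have pF : (p%:Z)%:~R = 0 :> 'F_p := pchar_Fp_0 p_pr.
rewrite intrM pF !mul0r addr0 in EF.
have u0 : u%:~R != 0 :> 'F_p.
  by apply: contraNneq N0 => u0; rewrite -sqrf_eq0 EF u0 expr0n !mulr0.
apply: (Fp_quartic_of_sqr p_pr pt (N := N%:~R) (u := u%:~R) (a := a%:~R)) => //.
  by rewrite EF mulrA.
by rewrite -p_half legendre_eq1 // (legendre_of_quartic_eqn kw ab uv E N0).
Qed.

Lemma T_scaled_integral_point (k w : nat) (a b : int) :
  (k * w = 2 * q)%N -> a != 0 -> a * b = - (p%:Z * w%:Z ^+ 2) ->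
  T_has_nontrivial_point p q (k%:Z * a) ->
  exists u v N : int, coprimez u v /\ N ^+ 2 = k%:Z * (a * u ^+ 4 + b * v ^+ 4).
Proof.
move=> kw a0 ab T.
have kwZ : k%:Z * w%:Z = 2 * q%:Z by rewrite -PoszM kw.
have k0 : k%:Z != 0.
  apply: contra_eq_neq kwZ => ->.
  by rewrite mul0r eq_sym mulf_neq0 // eqz_nat -lt0n prime_gt0.
have b1c : k%:Z * a * (k%:Z * b) = - (4 * p%:Z * q%:Z ^+ 2).
  transitivity (- (p%:Z * (k%:Z * w%:Z) ^+ 2)); last by rewrite kwZ; ring.
  by transitivity (k%:Z ^+ 2 * (a * b)); [ring | rewrite ab; ring].
have [u [v [N [uv E]]]] := T_coprime_integral_point (mulf_neq0 k0 a0) b1c T.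
by exists u, v, N; split => //; rewrite E; ring.
Qed.

Lemma quartic_of_T_point (k w : nat) (b1 : int) : (k * w = 2 * q)%N ->
  (exists2 e : int, e ^+ 2 = 1 & b1 = k%:Z * e \/ b1 = k%:Z * e * p%:Z) ->
  T_has_nontrivial_point p q b1 -> quartic_is_one k p.
Proof.
move=> kw [e e2 b1E] T.
have e0 : e != 0 by apply: contra_eq_neq e2 => ->; rewrite expr0n eq_sym oner_neq0.
have p0 : p%:Z != 0 by rewrite eqz_nat -lt0n prime_gt0.
have sqr_t (x : 'F_p) : x ^+ 2 = 1 -> x ^+ t = 1.
  by move=> x2; rewrite -(even_halfK t_even) -muln2 mulnC exprM x2 expr1n.
have e2F : e%:~R ^+ 2 = 1 :> 'F_p by rewrite -rmorphXn e2.
have w_t : w%:R ^+ (t * 2) = 1 :> 'F_p.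
  by rewrite -p_half legendre_eq1 // legendre_dvd_2q // -kw dvdn_mull.
have ac : e * (- e * w%:Z ^+ 2) = - w%:Z ^+ 2.
  by transitivity (- (e ^+ 2 * w%:Z ^+ 2)); [ring | rewrite e2 mul1r].
suff kt : k%:R ^+ t = 1 :> 'F_p by apply/eqP; rewrite -!val_Fp_nat // natrX kt.
case: b1E T => -> T.
- have ab : e * (- e * p%:Z * w%:Z ^+ 2) = - (p%:Z * w%:Z ^+ 2).
    by transitivity (p%:Z * (e * (- e * w%:Z ^+ 2))); [ring | rewrite ac mulrN].
  have [u [v [N [uv E]]]] := T_scaled_integral_point kw e0 ab T.
  apply: (quartic_of_integral_point kw ac (sqr_t _ e2F) uv (N := N)).
  by rewrite E; ring.
- rewrite -mulrA in T.
  have ab : e * p%:Z * (- e * w%:Z ^+ 2) = - (p%:Z * w%:Z ^+ 2).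
    by transitivity (p%:Z * (e * (- e * w%:Z ^+ 2))); [ring | rewrite ac mulrN].
  have [u [v [N [uv E]]]] := T_scaled_integral_point kw (mulf_neq0 e0 p0) ab T.
  have ca : - e * w%:Z ^+ 2 * e = - w%:Z ^+ 2 by rewrite mulrC ac.
  rewrite coprimez_sym in uv; apply: (quartic_of_integral_point kw ca _ uv (N := N)).
    by rewrite intrM exprMn intrN sqr_t ?sqrrN // rmorphXn -exprM mulnC w_t mul1r.
  by rewrite E; ring.
Qed.

End Proposition4.

Theorem proposition4 (p q : nat) :
  prime p -> prime q -> (p %% 8 = 1)%N -> (q %% 4 = 3)%N ->
  legendre_is_one p q ->
  ((exists b1 : int, b1 \in [:: 2; -2; - 2 * p%:Z; 2 * p%:Z] /\
        T_has_nontrivial_point p q b1) -> quartic_is_one 2 p) /\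
  ((exists b1 : int, b1 \in [:: q%:Z; - q%:Z; - (p%:Z * q%:Z); p%:Z * q%:Z] /\
        T_has_nontrivial_point p q b1) -> quartic_is_one q p) /\
  ((exists b1 : int, b1 \in [:: 2 * q%:Z; - 2 * q%:Z; - 2 * p%:Z * q%:Z; 2 * p%:Z * q%:Z] /\
        T_has_nontrivial_point p q b1) -> quartic_is_one (2 * q) p).
Proof.
move=> p_pr q_pr p8 q4 pq; have T_quartic := quartic_of_T_point p_pr q_pr p8 q4 pq.
split; [|split] => -[b1 [+ T]].
- move=> b1_in; apply: (T_quartic 2 q b1 erefl _ T).
  move: b1_in; rewrite !inE => /or4P[]/eqP->; [exists 1|exists (-1)|exists (-1)|exists 1];
    rewrite ?sqrrN ?expr1n //; [left|left|right|right]; ring.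
- move=> b1_in; apply: (T_quartic q 2 b1 (mulnC q 2) _ T).
  move: b1_in; rewrite !inE => /or4P[]/eqP->; [exists 1|exists (-1)|exists (-1)|exists 1];
    rewrite ?sqrrN ?expr1n //; [left|left|right|right]; ring.
- move=> b1_in; apply: (T_quartic (2 * q) 1 b1 (muln1 _) _ T).
  move: b1_in; rewrite !inE PoszM => /or4P[]/eqP->; [exists 1|exists (-1)|exists (-1)|exists 1];
    rewrite ?sqrrN ?expr1n //; [left|left|right|right]; ring.
Qed.
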